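(* Let $X$ be a real Banach space, $J=\{1,\ldots,l\}$, $g_j\colon X\to\mathbb{R}$, $M=\{x\in X\mid g_j(x)\le0\ \forall j\in J\}$, $\overline{x}\in M$ and $J(\overline{x})=\{j\in J\mid g_j(\overline{x})=0\}$. Suppose that the functions $g_j$, $j\in J(\overline{x})$, are quasidifferentiable at $\overline{x}$ (with given quasidifferentials) and the functions $g_j$, $j\notin J(\overline{x})$, are upper semicontinuous at $\overline{x}$. Let $z_j^*\in\overline{\partial} g_j(\overline{x})$, $j\in J(\overline{x})$, be such that $0\notin\operatorname{co}\{\underline{\partial} g_j(\overline{x})+z_j^*\mid j\in J(\overline{x})\}$. Then $$\Big\{v\in X\Bigm| s(\underline{\partial} g_j(\overline{x})+z_j^*,v)\le0,\ j\in J(\overline{x})\Big\}\subseteq T_M(\overline{x}).$$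
   Context: $X^*$ is the dual with pairing $\langle\cdot,\cdot\rangle$. $g$ is quasidifferentiable at $x$ if $g'(x,v)=\lim_{\alpha\to+0}(g(x+\alpha v)-g(x))/\alpha$ exists finitely for all $v$ and there is a pair $[\underline{\partial} g(x),\overline{\partial} g(x)]$ of convex weak$^*$ compact subsets of $X^*$ with $g'(x,v)=\max_{x^*\in\underline{\partial} g(x)}\langle x^*,v\rangle+\min_{y^*\in\overline{\partial} g(x)}\langle y^*,v\rangle$ for all $v$; a specific one is fixed. $s(C,v)=\sup_{x^*\in C}\langle x^*,v\rangle$; $\operatorname{co}$ is the convex hull of the union of the listed sets. $T_M(x)$ is the contingent cone: all $v$ such that there exist $\alpha_n\to+0$, $v_n\to v$ with $x+\alpha_nv_n\in M$. *)

From HB Require Import structures.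
From mathcomp Require Import all_boot all_order all_algebra.
From mathcomp Require Import all_classical all_reals all_analysis.
Set Implicit Arguments. Unset Strict Implicit. Unset Printing Implicit Defensive.
Import Order.TTheory GRing.Theory Num.Theory.
Import numFieldNormedType.Exports.
Local Open Scope classical_set_scope.
Local Open Scope ring_scope.

Section Defs.
Context {R : realType} {X : normedModType R}.

Definition is_dual (f : X -> R) : Prop :=
  (forall (a : R) (u v : X), f (a *: u + v) = a * f u + f v) /\ continuous f.

(* convex, weak* compact subset of X^*; the weak* topology on X^* is the
   subspace topology of the pointwise (product) topology on X -> R *)
Definition convex_fset (C : set (X -> R)) : Prop :=
  forall f h, C f -> C h -> forall t : R, 0 <= t <= 1 ->
    C (fun v => t * f v + (1 - t) * h v).

Definition wstar_cc (C : set (X -> R)) : Prop :=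
  (forall f, C f -> is_dual f) /\ convex_fset C /\
  @compact {ptws X -> R} C.

Definition quasidiff (g : X -> R) (x : X) (Dl Du : set (X -> R)) : Prop :=
  wstar_cc Dl /\ wstar_cc Du /\
  exists d : X -> R, forall v : X,
    ((fun a : R => (g (x + a *: v) - g x) / a) @ 0^'+ --> d v) /\
    exists f1 f2, Dl f1 /\ Du f2 /\
      (forall f, Dl f -> f v <= f1 v) /\ (forall f, Du f -> f2 v <= f v) /\
      d v = f1 v + f2 v.

Definition usc_at (g : X -> R) (x : X) : Prop :=
  forall e : R, 0 < e -> \forall y \near x, g y < g x + e.

Definition supp (C : set (X -> R)) (v : X) : \bar R :=
  ereal_sup [set (f v)%:E | f in C].

Definition translate (C : set (X -> R)) (z : X -> R) : set (X -> R) :=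
  [set (fun v => f v + z v) | f in C].

Definition conv_hull (A : set (X -> R)) : set (X -> R) :=
  [set y | exists (n : nat) (lam : 'I_n -> R) (p : 'I_n -> X -> R),
     (forall i, 0 <= lam i) /\ \sum_(i < n) lam i = 1 /\
     (forall i, A (p i)) /\ y = (fun v => \sum_(i < n) lam i * p i v)].

Definition contingent_cone (M : set X) (x : X) : set X :=
  [set v | exists (al : nat -> R) (vs : nat -> X),
     (forall n, 0 < al n) /\ al @ \oo --> 0 /\ vs @ \oo --> v /\
     (forall n, M (x + al n *: vs n))].

End Defs.

From HB Require Import structures.
From mathcomp Require Import all_boot all_order all_algebra.
From mathcomp Require Import all_classical all_reals all_analysis.
From mathcomp Require Import ring lra.
Import Order.TTheory GRing.Theory Num.Theory.
Import numFieldNormedType.Exports.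
Local Open Scope classical_set_scope.
Local Open Scope ring_scope.

(* Write H for the set of combinations sum_j lambda_j (f_j + z_j) with f_j in
   the lower quasidifferentials of the active g_j and lambda in the simplex: a
   subset of the convex hull in the hypothesis, compact in the weak* topology by
   Tychonoff, and closed under moving towards any f + z_j.  As 0 is not in H,
   compactness gives finitely many points x_1, ..., x_N at which no h in H
   vanishes simultaneously, so h |-> sum_i h(x_i)^2 has a positive minimum m on
   H, attained at p.  First-order optimality along segments gives
   sum_i p(x_i) h(x_i) >= m for all generators h, i.e. h(w) <= -m for
   w = - sum_i p(x_i) x_i.  For v in the given set, v + w/n is then a direction
   of strict descent of every active g_j, and upper semicontinuity handles the
   inactive ones, so xb + a (v + w/n) is feasible for small a > 0; letting n go
   to infinity puts v in the contingent cone. *)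

Section is_dual_theory.
Context {R : realType} {X : normedModType R} (f : X -> R) (f_dual : is_dual f).

Lemma is_dual0 : f 0 = 0.
Proof. by have := f_dual.1 1 0 0; rewrite scaler0 addr0 mul1r; lra. Qed.

Lemma is_dual_sum (I : Type) (s : seq I) (a : I -> R) (u : I -> X) :
  f (\sum_(i <- s) a i *: u i) = \sum_(i <- s) a i * f (u i).
Proof.
elim: s => [|i s IH]; first by rewrite !big_nil is_dual0.
by rewrite !big_cons f_dual.1 IH.
Qed.

End is_dual_theory.

Section sqsum.
Context {R : realType} {T : eqType}.

Definition sqsum (s : seq T) (h : T -> R) : R := \sum_(x <- s) h x ^+ 2.

Lemma sqsum_gt0 s h x : x \in s -> h x != 0 -> 0 < sqsum s h.
Proof.
move=> xs hx0; rewrite /sqsum (big_rem x) //= ltr_pwDl //.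
  by rewrite lt_def sqrf_eq0 hx0 sqr_ge0.
by apply: sumr_ge0 => y _; exact: sqr_ge0.
Qed.

Lemma ge0_of_quadratic_ge0 (a b : R) : 0 <= b ->
  (forall t, 0 < t <= 1 -> 0 <= 2 * t * a + t * t * b) -> 0 <= a.
Proof.
move=> b0 quad_ge0; rewrite leNgt; apply/negP => a0.
(* at this t, 2 a + t b = (1 + t) a < 0 *)
pose t := - a / (b - a).
have ba : 0 < b - a by lra.
have tba : t * (b - a) = - a by rewrite /t divfK // gt_eqF.
have t0 : 0 < t by rewrite /t divr_gt0 // oppr_gt0.
have t1 : t <= 1 by rewrite /t ler_pdivrMr // mul1r; lra.
have := quad_ge0 t; rewrite t0 t1 => /(_ isT); nra.
Qed.

Lemma min_sqsum_le_inner s (p r : T -> R) :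
  (forall t, 0 < t <= 1 -> sqsum s p <= sqsum s (fun x => (1 - t) * p x + t * r x)) ->
  sqsum s p <= \sum_(x <- s) p x * r x.
Proof.
move=> p_min.
pose a := \sum_(x <- s) p x * (r x - p x).
pose b := \sum_(x <- s) (r x - p x) ^+ 2.
have sqsum_segment t :
    sqsum s (fun x => (1 - t) * p x + t * r x) = sqsum s p + 2 * t * a + t * t * b.
  rewrite /sqsum /a /b !mulr_sumr -!big_split /=.
  by apply: eq_bigr => x _; ring.
have -> : \sum_(x <- s) p x * r x = sqsum s p + a.
  by rewrite /sqsum /a -big_split /=; apply: eq_bigr => x _; ring.
rewrite lerDl; apply: (@ge0_of_quadratic_ge0 _ b).
  by apply: sumr_ge0 => x _; exact: sqr_ge0.
by move=> t /p_min; rewrite sqsum_segment; lra.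
Qed.

End sqsum.

Section compact_separation.
Context {R : realType} {T : ptopologicalType} {X : choiceType} {F : T -> X -> R}.
Hypothesis F_cont : forall x, continuous (fun t => F t x).

Lemma continuous_sqsum s : continuous (fun t => sqsum s (F t)).
Proof.
apply: (continuous_big add_continuous) => x _ t.
exact: continuous_comp (F_cont x t) (@exprn_continuous R 2 _).
Qed.

Lemma compact_sqsum_gt0 {P : set T} : compact P ->
  (forall t, P t -> exists x, F t x != 0) ->
  exists s, forall t, P t -> 0 < sqsum s (F t).
Proof.
rewrite compact_cover => Pcover F_neq0.
have [x _|t Pt|D _ D_cover] := Pcover X setT (fun x => [set t | F t x != 0]).
- apply: (@open_comp _ R (fun t => F t x) [set y | y != 0]); last exact: open_neq.
  by move=> t _; exact: F_cont.
- by have [x Ftx] := F_neq0 t Pt; exists x.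
exists (finmap.enum_fset D) => t /D_cover[x xD Ftx]; exact: sqsum_gt0 xD Ftx.
Qed.

Lemma compact_finite_separation (P : set T) (A : set (X -> R)) :
  compact P -> P !=set0 -> (forall t, P t -> exists x, F t x != 0) ->
  (forall t r u, P t -> A r -> 0 < u <= 1 ->
     exists2 t', P t' & forall x, F t' x = (1 - u) * F t x + u * r x) ->
  exists s (p : X -> R) m, 0 < m /\ forall r, A r -> m <= \sum_(x <- s) p x * r x.
Proof.
move=> Pc P0 F_neq0 P_segment.
have [s sqsum_F_gt0] := compact_sqsum_gt0 Pc F_neq0.
have [t0 /set_mem Pt0 t0_min] :=
  compact_EVT_min P0 Pc (continuous_subspaceT (continuous_sqsum s)).
exists s, (F t0), (sqsum s (F t0)); split=> [|r Ar]; first exact: sqsum_F_gt0.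
apply: min_sqsum_le_inner => u u01.
have [t' Pt' Ft'] := P_segment t0 r u Pt0 Ar u01.
have -> : (fun x => (1 - u) * F t0 x + u * r x) = F t' by apply: funext => x; rewrite Ft'.
exact: t0_min (mem_set Pt').
Qed.

End compact_separation.

Definition hull_space {R : realType} (X : normedModType R) (n : nat) : Type :=
  prod_topology (fun _ : 'I_n => ({ptws X -> R} * R)%type).
HB.instance Definition _ (R : realType) (X : normedModType R) n :=
  Topological.on (hull_space X n).
(* [compact_cover] is only available on pointed spaces. *)
HB.instance Definition _ (R : realType) (X : normedModType R) n :=
  isPointed.Build (hull_space X n) (fun _ => (fun _ => 0, 0)).

Section finite_hull.
Context {R : realType} {X : normedModType R} {n : nat}
  (K : 'I_n -> set (X -> R)) (c : 'I_n -> X -> R).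

Local Notation hull_space := (hull_space X n).

Definition hull_param : set hull_space :=
  [set G | (forall j, (K j `*` `[0, 1]) (G j)) /\ \sum_(j < n) (G j).2 = 1].

Definition hull_point (G : hull_space) (x : X) : R :=
  \sum_(j < n) (G j).2 * ((G j).1 x + c j x).

Lemma continuous_hull_weight j : continuous (fun G : hull_space => (G j).2).
Proof.
move=> G; apply: (@continuous_comp _ _ _ (fun G : hull_space => G j) snd); last exact: cvg_snd.
exact: (@proj_continuous _ (fun _ : 'I_n => ({ptws X -> R} * R)%type) j).
Qed.

Lemma continuous_hull_point x : continuous (fun G : hull_space => hull_point G x).
Proof.
have eval_x : continuous (fun f : {ptws X -> R} => f x).
  exact: (@proj_continuous _ (fun _ : X => R) x).
have coord_x j : continuous (fun G : hull_space => (G j).1 x).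
  move=> G; apply: (@continuous_comp _ _ _ (fun G : hull_space => (G j).1) (fun f => f x)).
    2: exact: eval_x.
  apply: (@continuous_comp _ _ _ (fun G : hull_space => G j) fst); last exact: cvg_fst.
  exact: (@proj_continuous _ (fun _ : 'I_n => ({ptws X -> R} * R)%type) j).
apply: (continuous_big add_continuous) => j _ G.
apply: cvgM; [exact: nbhs_filter | exact: continuous_hull_weight |].
by apply: cvgD; [exact: nbhs_filter | exact: coord_x | apply: cvg_cst; exact: nbhs_filter].
Qed.

Lemma compact_hull_param :
  (forall j, @compact {ptws X -> R} (K j)) -> compact hull_param.
Proof.
move=> K_compact.
apply: (@compact_closedI _ [set G : hull_space | forall j, (K j `*` `[0, 1]) (G j)]
  [set G | \sum_(j < n) (G j).2 = 1]).
  exact: (@tychonoff _ (fun _ : 'I_n => ({ptws X -> R} * R)%type) (fun j => K j `*` `[0, 1])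
    (fun j => compact_setX (K_compact j) (@segment_compact R 0 1))).
apply: (@preimage_closed _ _ (fun G : hull_space => \sum_(j < n) (G j).2) [set 1]).
  by move=> G _; exact: (continuous_big add_continuous (fun j _ => continuous_hull_weight j)).
exact: closed_eq.
Qed.

Lemma hull_param_conv_hull (U : set (X -> R)) G :
  (forall j, translate (K j) (c j) `<=` U) -> hull_param G -> conv_hull U (hull_point G).
Proof.
move=> KU [G_box G_sum]; exists n, (fun j => (G j).2), (fun j x => (G j).1 x + c j x).
split; first by move=> j; have [_] := G_box j; rewrite /= in_itv /= => /andP[].
split=> //; split=> // j; apply: KU; exists (G j).1 => //.
by have [] := G_box j.
Qed.

Lemma hull_param_neq0 (j0 : 'I_n) : (forall j, K j !=set0) -> hull_param !=set0.
Proof.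
move=> K_neq0; have [f Kf] := @choice _ _ (fun j g => K j g) K_neq0.
exists (fun j => (f j, (j == j0)%:R)); split.
  by move=> j; split=> //=; rewrite in_itv /=; case: (j == j0); rewrite ?lexx ?ler01.
by rewrite (bigD1 j0) //= eqxx big1 ?addr0 // => j /negbTE ->.
Qed.

Lemma hull_param_segment k q G u : convex_fset (K k) -> K k q -> hull_param G ->
  0 < u <= 1 -> exists2 G', hull_param G' &
    forall x, hull_point G' x = (1 - u) * hull_point G x + u * (q x + c k x).
Proof.
move=> Kk_convex Kkq [G_box G_sum] /andP[u0 u1].
have weight01 j : 0 <= (G j).2 <= 1 by have [_] := G_box j; rewrite /= in_itv.
have /andP[wk0 wk1] := weight01 k.
pose wk := (1 - u) * (G k).2 + u.
have wk_gt0 : 0 < wk by rewrite /wk; nra.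
pose sc := (1 - u) * (G k).2 / wk.
have sc01 : 0 <= sc <= 1.
  by rewrite /sc divr_ge0 ?ler_pdivrMr ?mul1r /wk //=; nra.
pose G' : hull_space := fun j =>
  if j == k then (fun x => sc * (G k).1 x + (1 - sc) * q x, wk)
  else ((G j).1, (1 - u) * (G j).2).
exists G'; first split.
- move=> j; rewrite /G'; case: eqP => [->|_] /=; rewrite in_itv /=.
    by split; [apply: Kk_convex => //; have [] := G_box k | apply/andP; split; rewrite /wk; nra].
  have /andP[wj0 wj1] := weight01 j.
  by split; [have [] := G_box j | apply/andP; split; nra].
- rewrite (bigD1 k) //= /G' eqxx /=.
  rewrite (eq_bigr (fun j => (1 - u) * (G j).2)) => [|j /negbTE -> //].
  move: G_sum; rewrite (bigD1 k) //= -mulr_sumr /wk => G_sum.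
  have -> : \sum_(j < n | j != k) (G j).2 = 1 - (G k).2 by lra.
  by ring.
- move=> x; rewrite /hull_point (bigD1 k) //= [in RHS](bigD1 k) //= /G' eqxx /=.
  rewrite (eq_bigr (fun j => (1 - u) * ((G j).2 * ((G j).1 x + c j x)))); last first.
    by move=> j /negbTE -> /=; rewrite mulrA.
  by rewrite -mulr_sumr /sc /wk; field; rewrite -/wk gt_eqF.
Qed.

End finite_hull.

Lemma conv_hull_separation {R : realType} {X : normedModType R} {l : nat}
  {act : set 'I_l} {D : 'I_l -> set (X -> R)} {z : 'I_l -> X -> R} :
  (forall j, act j -> wstar_cc (D j)) -> (forall j, act j -> D j !=set0) ->
  (forall j, act j -> is_dual (z j)) ->
  ~ conv_hull (\bigcup_(j in act) translate (D j) (z j)) (fun _ => 0) ->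
  exists w m, 0 < m /\ forall j, act j -> forall f, D j f -> f w + z j w <= - m.
Proof.
move=> D_cc D_neq0 z_dual hull_neq0.
have [[j0 act_j0]|no_act] := pselect (exists j, act j); last first.
  by exists 0, 1; split=> // j act_j; exfalso; apply: no_act; exists j.
(* Inactive indices are relabelled as j0, so that H is parametrized over all of 'I_l. *)
pose e j := if pselect (act j) is left _ then j else j0.
have act_e j : act (e j) by rewrite /e; case: pselect.
have e_act j : act j -> e j = j by rewrite /e; case: pselect.
pose U := \bigcup_(j in act) translate (D j) (z j).
have U_hull G : hull_param (D \o e) G -> conv_hull U (hull_point (z \o e) G).
  by apply: hull_param_conv_hull => j _ [f Df <-]; exists (e j) => //; exists f.
have point_neq0 G : hull_param (D \o e) G -> exists x, hull_point (z \o e) G x != 0.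
  move=> /U_hull G_hull; apply/not_existsP => G_eq0; apply: hull_neq0.
  suff -> : (fun _ => 0) = hull_point (z \o e) G by [].
  by apply: funext => x; have /negP := G_eq0 x; rewrite negbK => /eqP.
have segment G r u : hull_param (D \o e) G -> U r -> 0 < u <= 1 ->
    exists2 G', hull_param (D \o e) G' &
      forall x, hull_point (z \o e) G' x = (1 - u) * hull_point (z \o e) G x + u * r x.
  move=> PG [k act_k [q Dq <-]] u01.
  have := hull_param_segment (D \o e) (z \o e) k q G u.
  rewrite /= e_act //; apply=> //; exact: (D_cc k act_k).2.1.
have [s [p [m [m_gt0 sep]]]] := compact_finite_separation
  (@continuous_hull_point R X l (z \o e)) _ U
  (compact_hull_param (D \o e) (fun j => (D_cc _ (act_e j)).2.2))
  (hull_param_neq0 (D \o e) j0 (fun j => D_neq0 _ (act_e j))) point_neq0 segment.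
exists (\sum_(x <- s) (- p x) *: x), m; split=> // j act_j f Df.
rewrite (is_dual_sum _ ((D_cc j act_j).1 f Df)) (is_dual_sum _ (z_dual j act_j)).
rewrite -big_split /= lerNr -sumrN.
under eq_bigr do rewrite -mulrDr mulNr opprK.
by apply: sep; exists j => //; exists f.
Qed.

Section feasible_directions.
Context {R : realType} {X : normedModType R}.

Lemma le_supp_translate (z : X -> R) {C : set (X -> R)} {f : X -> R} v :
  C f -> ((f v + z v)%:E <= supp (translate C z) v)%E.
Proof. by move=> Cf; apply: ereal_sup_ubound; exists (fun u => f u + z u) => //; exists f. Qed.

Lemma quasidiff_near_lt {g : X -> R} {x : X} {Dl Du : set (X -> R)} {z u} :
  quasidiff g x Dl Du -> Du z -> (forall f, Dl f -> f u + z u < 0) ->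
  \forall a \near 0^'+, g (x + a *: u) < g x.
Proof.
move=> [_ [_ [d d_quot]]] Du_z u_descent.
have [d_lim [f1 [f2 [Dl_f1 [Du_f2 [_ [f2_min d_u]]]]]]] := d_quot u.
have du_lt0 : d u < 0 by rewrite d_u; have := f2_min z Du_z; have := u_descent f1 Dl_f1; lra.
near=> a.
have a_gt0 : 0 < a by near: a; exact: nbhs_right_gt.
suff : (g (x + a *: u) - g x) / a < 0 by rewrite ltr_pdivrMr // mul0r subr_lt0.
by near: a; exact: cvgr_lt (d u) d_lim 0 du_lt0.
Unshelve. all: by end_near.
Qed.

Lemma usc_at_near_lt {g : X -> R} {x : X} (u : X) {c : R} : usc_at g x -> g x < c ->
  \forall a \near 0^'+, g (x + a *: u) < c.
Proof.
move=> g_usc gx_lt_c.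
have to_x : (fun a : R => x + a *: u) @ 0^'+ --> x.
  apply: cvg_at_right_filter; rewrite -{2}[x]addr0 -(scale0r u).
  by apply: cvgD; [exact: cvg_cst | exact: cvgZr_tmp].
have := g_usc (c - g x); rewrite subr_gt0 addrC subrK => /(_ gx_lt_c).
exact: to_x.
Qed.

Lemma near_contingent_cone (M : set X) x v (u : nat -> X) :
  u @ \oo --> v -> (forall n, \forall a \near 0^'+, M (x + a *: u n)) ->
  contingent_cone M x v.
Proof.
move=> u_to_v M_near.
have pick n : exists a : R, 0 < a < harmonic n /\ M (x + a *: u n).
  suff /filter_ex[a ?] : \forall a \near 0^'+, (0 < a < harmonic n) /\ M (x + a *: u n).
    by exists a.
  near=> a; split; last by near: a; exact: M_near.
  apply/andP; split; near: a; first exact: nbhs_right_gt.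
  exact/nbhs_right_lt/harmonic_gt0.
have [al al_spec] := choice pick.
exists al, u; split=> [n|]; first by have [/andP[]] := al_spec n.
split; last by split=> // n; have [] := al_spec n.
apply: (@squeeze_cvgr _ _ _ _ (fun _ => 0) harmonic); last exact: cvg_harmonic.
- by apply: nearW => n; have [/andP[a_gt0 a_lt] _] := al_spec n; rewrite !ltW.
- exact: cvg_cst.
Unshelve. all: by end_near.
Qed.

End feasible_directions.

Theorem corollary2 (R : realType) (X : completeNormedModType R) (l : nat)
  (g : 'I_l -> X -> R) (xb : X)
  (Dl Du : 'I_l -> set (X -> R)) (z : 'I_l -> X -> R) :
  let M := [set x : X | forall j, g j x <= 0] in
  let act := [set j : 'I_l | g j xb = 0] in
  M xb ->
  (forall j, act j -> quasidiff (g j) xb (Dl j) (Du j)) ->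
  (forall j, ~ act j -> usc_at (g j) xb) ->
  (forall j, act j -> Du j (z j)) ->
  ~ conv_hull (\bigcup_(j in act) translate (Dl j) (z j)) (fun _ => 0) ->
  [set v : X | forall j, act j -> (supp (translate (Dl j) (z j)) v <= 0)%E]
    `<=` contingent_cone M xb.
Proof.
move=> M act M_xb g_qd g_usc Du_z hull_neq0 v v_supp.
have Dl_cc j : act j -> wstar_cc (Dl j) by move=> /g_qd[].
have Dl_neq0 j : act j -> Dl j !=set0.
  by move=> /g_qd[_ [_ [d /(_ 0)[_ [f1 [_ [Dl_f1 _]]]]]]]; exists f1.
have z_dual j : act j -> is_dual (z j).
  by move=> act_j; have [_ [[+ _] _]] := g_qd j act_j; apply; exact: Du_z.
have [w [m [m_gt0 w_sep]]] := conv_hull_separation Dl_cc Dl_neq0 z_dual hull_neq0.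
apply: (@near_contingent_cone _ _ _ _ _ (fun n => v + harmonic n *: w)).
  rewrite -{2}[v]addr0 -(scale0r w).
  by apply: cvgD; [exact: cvg_cst | exact: cvgZr_tmp cvg_harmonic].
move=> n; set u := v + harmonic n *: w.
apply: filter_forall => j; have [act_j|inact_j] := pselect (act j).
- have descent f : Dl j f -> f u + z j u < 0.
    move=> Df; have [[f_lin _] [z_lin _]] := ((Dl_cc j act_j).1 f Df, z_dual j act_j).
    rewrite /u [v + _]addrC f_lin z_lin.
    have := le_trans (le_supp_translate (z j) v Df) (v_supp j act_j); rewrite lee_fin.
    have := ler_wpM2l (ltW (harmonic_gt0 n)) (w_sep j act_j f Df).
    have := @harmonic_gt0 R n; nra.
  apply: filterS (quasidiff_near_lt (g_qd j act_j) (Du_z j act_j) descent) => a.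
  by rewrite (_ : g j xb = 0) // => /ltW.
- have gj_lt0 : g j xb < 0.
    by rewrite lt_neqAle (M_xb j) andbT; exact/eqP.
  by apply: filterS (usc_at_near_lt u (g_usc j inact_j) gj_lt0) => a /ltW.
Qed.
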